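(* Let $G=(V,E)$ be a (not necessarily connected) graph with $|V|=n\ge1$ and adjacency matrix $A$, let $m\ge1$, and assume $\bar K_m+G$ is not a complete graph. Define \begin{itemize} \item $\Lambda_0=\{-m\}$ if $m\ge2$ and $m$ is an eigenvalue of $J-A$, and $\Lambda_0=\emptyset$ otherwise; \item $\Lambda_1$ = the set of $\alpha\in\mathbb{R}\setminus(\mathrm{ev}(A)\cup\{0,-m,-2m\})$ satisfying $(\alpha+2m)\langle\mathbf 1,(A-\alpha I)^{-1}\mathbf 1\rangle-m=0$; \item $\Lambda_2=\{-2m\}$ if $-2m\in\mathrm{ev}(A)$, and $\Lambda_2=\emptyset$ otherwise; \item $\Lambda_3$ = the set of $\alpha\in\mathrm{ev}(A)\setminus\{0,-m,-2m\}$ for which there is $g\in\mathbb{R}^n$ with $Ag=\alpha g$, $\langle g,g\rangle=1$, $\langle\mathbf 1,g\rangle=0$. \end{itemize} Then \[ \mathrm{QEC}(\bar K_m+G)=-\tilde\alpha-2,\qquad \tilde\alpha=\min(\Lambda_0\cup\Lambda_1\cup\Lambda_2\cup\Lambda_3). \]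
   Context: For a finite connected graph $H=(V,E)$ with $|V|\ge2$ and distance matrix $D$ (graph distance), $\mathrm{QEC}(H)=\max\{\langle f,Df\rangle : f\in\mathbb{R}^V,\ \langle f,f\rangle=1,\ \langle\mathbf 1,f\rangle=0\}$, with $\mathbf 1$ the all-ones vector. $\bar K_m$ is the graph on $m$ vertices with no edges. The join $G_1+G_2$ of disjoint graphs has vertex set $V_1\cup V_2$ and edge set $E_1\cup E_2\cup\{\{x,y\}:x\in V_1,y\in V_2\}$. $J$ is the $n\times n$ all-ones matrix, $I$ the identity, $\mathrm{ev}(A)$ the set of eigenvalues of $A$. *)

From HB Require Import structures.
From mathcomp Require Import all_boot all_order all_algebra.
From mathcomp Require Import reals.
Set Implicit Arguments. Unset Strict Implicit. Unset Printing Implicit Defensive.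
Import Order.TTheory GRing.Theory Num.Theory.
Local Open Scope ring_scope.

Definition simple_graph (T : finType) (e : rel T) : Prop :=
  (forall x y, e x y = e y x) /\ (forall x, ~~ e x x).

Definition complete_graph (T : finType) (e : rel T) : Prop :=
  forall x y, x != y -> e x y.

Fixpoint reach (T : finType) (e : rel T) (k : nat) (x y : T) : bool :=
  match k with
  | 0 => x == y
  | k'.+1 => (x == y) || [exists z, e x z && reach e k' z y]
  end.

(* graph distance: least k with a walk of length k (correct for connected graphs;
   any shortest path has length < #|T|) *)
Definition gdist (T : finType) (e : rel T) (x y : T) : nat :=
  find (fun k => reach e k x y) (iota 0 #|T|).

Definition distqf (R : realType) (T : finType) (e : rel T) (f : T -> R) : R :=
  \sum_(x : T) \sum_(y : T) f x * (gdist e x y)%:R * f y.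

Definition is_QEC (R : realType) (T : finType) (e : rel T) (q : R) : Prop :=
  (exists f : T -> R, \sum_x f x ^+ 2 = 1 /\ \sum_x f x = 0 /\ distqf e f = q) /\
  (forall f : T -> R, \sum_x f x ^+ 2 = 1 -> \sum_x f x = 0 -> distqf e f <= q).

Definition join_Kbar (m n : nat) (e : rel 'I_n) : rel ('I_m + 'I_n)%type :=
  fun x y => match x, y with
             | inl _, inl _ => false
             | inr i, inr j => e i j
             | _, _ => true
             end.

Definition adjmx (R : realType) (n : nat) (e : rel 'I_n) : 'M[R]_n :=
  \matrix_(i, j) (e i j)%:R.

Definition sum_entries (R : realType) (n : nat) (M : 'M[R]_n) : R :=
  \sum_i \sum_j M i j.

Definition in_Lambda (R : realType) (m n : nat) (A : 'M[R]_n) (a : R) : Prop :=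
  let mR := (m%:R : R) in
  ((2 <= m)%N /\ eigenvalue (const_mx 1 - A) mR /\ a = - mR)
  \/
  (~~ eigenvalue A a /\ a <> 0 /\ a <> - mR /\ a <> - (2 * mR) /\
   (a + 2 * mR) * sum_entries (invmx (A - a%:M)) - mR = 0)
  \/
  (eigenvalue A (- (2 * mR)) /\ a = - (2 * mR))
  \/
  (eigenvalue A a /\ a <> 0 /\ a <> - mR /\ a <> - (2 * mR) /\
   exists g : 'cV[R]_n, A *m g = a *: g /\ \sum_i g i 0 ^+ 2 = 1 /\ \sum_i g i 0 = 0).

Arguments join_Kbar m {n} e.
Arguments in_Lambda {R} m {n} A a.

From HB Require Import structures.
From mathcomp Require Import all_boot all_order all_algebra.
From mathcomp Require Import reals.
From mathcomp Require Import boolp classical_sets functions topology normedtype.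
From mathcomp Require Import derive matrix_normedtype.
From mathcomp Require Import ring lra.
Import numFieldNormedType.Exports.
Set Implicit Arguments. Unset Strict Implicit. Unset Printing Implicit Defensive.
Import Order.TTheory GRing.Theory Num.Theory.
Local Open Scope ring_scope.

(* On H = \bar K_m + G, which is not complete and hence has diameter 2, the
   distance matrix is D = 2 (J - I) - A_H, so on the sum-zero unit sphere
   <f, D f> = -2 - <f, A_H f> and QEC(H) = -2 - mu, where mu is the minimum of
   <f, A_H f> there.  A minimiser exists by compactness and satisfies the
   Lagrange condition A_H f = mu f + c 1; for mu <> 0 it is constant on
   \bar K_m, and its restriction y to G satisfies A y = mu y + s (2 + mu/m) 1
   with s = <1, y>.  Splitting according to mu = -2m, mu = -m, s = 0, and
   whether mu is an eigenvalue of A (an eigenvector is then orthogonal to 1)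
   puts mu in Lambda_2, Lambda_0, Lambda_3, Lambda_3 or Lambda_1.  Conversely
   every alpha in some Lambda_i yields such a y, hence a sum-zero test vector
   with Rayleigh quotient alpha, so mu <= alpha.  Two explicit test vectors give
   mu <= -1, and mu < -1 when m = 1, which rules out mu = 0 and mu = -m for
   m = 1, where Lambda_0 is empty. *)

Lemma continuous_sum (R : numFieldType) (U : topologicalType) (I : Type) (s : seq I)
    (F : I -> U -> R) :
  (forall i, continuous (F i)) -> continuous (fun u => \sum_(i <- s) F i u).
Proof.
move=> cF; rewrite (_ : (fun u => _) = \sum_(i <- s) F i); last first.
  by apply/funext => u; rewrite fct_sumE.
apply: (big_ind (fun h : U -> R => continuous h)) => //.
  exact: cst_continuous.
by move=> f g cf cg u; apply: (@continuousD _ R^o); [exact: cf | exact: cg].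
Qed.

Lemma sumsq_normalize (R : rcfType) (I : finType) (F : I -> R) :
  0 < \sum_i F i ^+ 2 -> exists t : R, t ^+ 2 * \sum_i F i ^+ 2 = 1.
Proof.
move=> S_gt0; exists (Num.sqrt (\sum_i F i ^+ 2))^-1.
by rewrite exprVn sqr_sqrtr ?ltW // mulVf // gt_eqF.
Qed.

Lemma quadratic_ge0_lin_eq0 (R : realFieldType) (b c : R) :
  (forall t, 0 <= t * b + t ^+ 2 * c) -> b = 0.
Proof.
move=> H; apply/eqP/negPn/negP => b_neq0.
pose d := 1 + `|c|; have d_gt0 : 0 < d by rewrite ltr_pwDl.
have := H (- b / d).
have -> : - b / d * b + (- b / d) ^+ 2 * c = b ^+ 2 * (c - d) / d ^+ 2.
  by field; rewrite gt_eqF.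
rewrite pmulr_lge0 ?invr_gt0 ?exprn_gt0 // pmulr_rge0 ?exprn_even_gt0 //=.
by rewrite subr_ge0 /d; have := ler_norm c; lra.
Qed.

Section QuadraticForm.
Variables (R : realType) (T : finType).
Implicit Types (C : T -> T -> R) (f g : T -> R).
Local Open Scope classical_set_scope.

Definition qform C f : R := \sum_x \sum_y f x * C x y * f y.

Definition pmass (s : seq (T * R)) (x : T) : R := \sum_(p <- s) p.2 * (p.1 == x)%:R.

Lemma sum_delta (x : T) (F : T -> R) : \sum_y (x == y)%:R * F y = F x.
Proof.
rewrite (bigD1 x) //= eqxx mul1r big1 ?addr0 // => y.
by rewrite eq_sym => /negbTE ->; rewrite mul0r.
Qed.

Lemma sum_pmassM s (F : T -> R) :
  \sum_x pmass s x * F x = \sum_(p <- s) p.2 * F p.1.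
Proof.
under eq_bigr do rewrite mulr_suml.
rewrite exchange_big; apply: eq_bigr => p _.
by under eq_bigr do rewrite -mulrA; rewrite -mulr_sumr sum_delta.
Qed.

Lemma sum_pmass s : \sum_x pmass s x = \sum_(p <- s) p.2.
Proof.
have := sum_pmassM s (fun=> 1).
by under eq_bigr do rewrite mulr1; under [RHS]eq_bigr do rewrite mulr1.
Qed.

Lemma qform_pmass C s :
  qform C (pmass s) = \sum_(p <- s) \sum_(q <- s) p.2 * C p.1 q.1 * q.2.
Proof.
transitivity (\sum_x pmass s x * \sum_(q <- s) q.2 * C x q.1).
  apply: eq_bigr => x _; rewrite -sum_pmassM mulr_sumr.
  by apply: eq_bigr => y _; ring.
rewrite sum_pmassM; apply: eq_bigr => p _; rewrite mulr_sumr.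
by apply: eq_bigr => q _; ring.
Qed.

Lemma qformE C f : qform C f = \sum_x f x * \sum_y C x y * f y.
Proof.
by apply: eq_bigr => x _; rewrite mulr_sumr; apply: eq_bigr => y _; rewrite mulrA.
Qed.

Lemma sumsq_qform f : \sum_x f x ^+ 2 = qform (fun x y => (x == y)%:R) f.
Proof.
apply: eq_bigr => x _; rewrite expr2 -(sum_delta x (fun y => f y * f x)).
by apply: eq_bigr => y _; ring.
Qed.

Lemma qformZ C f t : qform C (fun x => t * f x) = t ^+ 2 * qform C f.
Proof.
rewrite /qform mulr_sumr; apply: eq_bigr => x _; rewrite mulr_sumr.
by apply: eq_bigr => y _; ring.
Qed.

Lemma sumsqZ f t : \sum_x (t * f x) ^+ 2 = t ^+ 2 * \sum_x f x ^+ 2.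
Proof. by rewrite !sumsq_qform qformZ. Qed.

Lemma qformDZ C f g t : (forall x y, C x y = C y x) ->
  qform C (fun x => f x + t * g x) =
  qform C f + t * (2 * \sum_x g x * \sum_y C x y * f y) + t ^+ 2 * qform C g.
Proof.
move=> C_sym; set P := \sum_x _ * _.
have cross : \sum_x \sum_y f x * C x y * g y = P.
  rewrite exchange_big; apply: eq_bigr => y _; rewrite mulr_sumr.
  by apply: eq_bigr => x _; rewrite C_sym; ring.
have direct : \sum_x \sum_y g x * C x y * f y = P.
  by apply: eq_bigr => x _; rewrite mulr_sumr; apply: eq_bigr => y _; ring.
transitivity (qform C f + t * (\sum_x \sum_y g x * C x y * f y
    + \sum_x \sum_y f x * C x y * g y) + t ^+ 2 * qform C g).
  rewrite /qform mulrDr !mulr_sumr -!big_split; apply: eq_bigr => x _ /=.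
  by rewrite !mulr_sumr -!big_split; apply: eq_bigr => y _ /=; ring.
by rewrite direct cross; ring.
Qed.

Definition rayleigh_lb C (mu : R) : Prop :=
  forall g, \sum_x g x = 0 -> mu * \sum_x g x ^+ 2 <= qform C g.

Lemma exists_unit_sum0 : (1 < #|T|)%N ->
  exists f : T -> R, \sum_x f x ^+ 2 = 1 /\ \sum_x f x = 0.
Proof.
move=> /card_gt1P [x [y [_ _ x_neq_y]]]; pose g := pmass [:: (x, 1); (y, -1)].
have [t t2] : exists t, t ^+ 2 * \sum_z g z ^+ 2 = 1.
  apply: sumsq_normalize; rewrite sumsq_qform qform_pmass !big_cons !big_nil /=.
  by rewrite !eqxx (negbTE x_neq_y) eq_sym (negbTE x_neq_y) /=; lra.
exists (fun z => t * g z); rewrite sumsqZ t2 -mulr_sumr sum_pmass !big_cons big_nil /=.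
by rewrite addr0 subrr mulr0.
Qed.

Lemma qform_min_exists C : (1 < #|T|)%N ->
  exists f, [/\ \sum_x f x ^+ 2 = 1, \sum_x f x = 0 &
    forall g, \sum_x g x ^+ 2 = 1 -> \sum_x g x = 0 -> qform C f <= qform C g].
Proof.
move=> /exists_unit_sum0 [f0 [f0_1 f0_0]].
pose vf (v : 'rV[R]_#|T|) z : R := v ord0 (enum_rank z).
pose fv f : 'rV[R]_#|T| := \row_i f (enum_val i).
have vfK f : vf (fv f) = f by apply/funext => z; rewrite /vf mxE enum_rankK.
have vf_cont z : continuous (vf^~ z) by exact: coord_continuous.
have contM (u w : 'rV[R]_#|T| -> R) :
    continuous u -> continuous w -> continuous (fun v => u v * w v).
  by move=> cu cw v; apply: continuousM; [exact: cu | exact: cw].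
have sumsq_cont : continuous (fun v => \sum_z vf v z ^+ 2).
  by apply: continuous_sum => z; under eq_fun do rewrite expr2; exact: contM.
have qform_cont : continuous (fun v => qform C (vf v)).
  apply: continuous_sum => z; apply: continuous_sum => z'.
  by apply: (contM) => //; apply: (contM) => //; exact: cst_continuous.
pose S := [set v : 'rV[R]_#|T| | \sum_z vf v z ^+ 2 = 1 /\ \sum_z vf v z = 0].
have S_neq0 : S !=set0 by exists (fv f0); rewrite /S /= vfK.
have S_compact : compact S.
  have S_closed : closed S.
    have -> : S = (fun v => \sum_z vf v z ^+ 2) @^-1` [set 1] `&`
                  (fun v => \sum_z vf v z) @^-1` [set 0] by [].
    apply: closedI; apply: preimage_closed.
    - by move=> v _; exact: sumsq_cont.
    - exact: closed_eq.
    - by move=> v _; apply: continuous_sum => z; exact: vf_cont.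
    - exact: closed_eq.
  apply: (subclosed_compact S_closed
    (rV_compact (fun=> @segment_compact R (-1) 1))) => v [v1 _] i /=.
  have -> : v ord0 i = vf v (enum_val i) by rewrite /vf enum_valK.
  rewrite in_itv /= -ler_norml -(expr_le1 (n:=2)) // real_normK ?num_real //.
  rewrite -v1 (bigD1 (enum_val i)) //= lerDl.
  by apply: sumr_ge0 => z _; exact: sqr_ge0.
have [c] := compact_EVT_min S_neq0 S_compact (continuous_subspaceT qform_cont).
rewrite inE => -[c1 c0] c_min; exists (vf c); split => // g g1 g0.
by have := c_min (fv g); rewrite vfK; apply; rewrite inE /S /= vfK.
Qed.

Lemma qform_min_rayleigh_lb C f :
  (forall g, \sum_x g x ^+ 2 = 1 -> \sum_x g x = 0 -> qform C f <= qform C g) ->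
  rayleigh_lb C (qform C f).
Proof.
move=> f_min g g0.
have [S0|S_neq0] := eqVneq (\sum_x g x ^+ 2) 0.
  have g_eq0 x : g x = 0.
    apply/eqP; rewrite -sqrf_eq0; apply/eqP/(psumr_eq0P _ S0) => // z _.
    exact: sqr_ge0.
  by rewrite S0 mulr0 /qform big1 // => x _; rewrite big1 // => y _; rewrite g_eq0 !mul0r.
have S_gt0 : 0 < \sum_x g x ^+ 2.
  by rewrite lt_def S_neq0 sumr_ge0 // => x _; exact: sqr_ge0.
have [t t2] := sumsq_normalize S_gt0.
have := f_min (fun x => t * g x); rewrite sumsqZ t2 -mulr_sumr g0 mulr0 qformZ.
move=> /(_ erefl erefl) /(ler_wpM2r (ltW S_gt0)).
by rewrite mulrAC t2 mul1r.
Qed.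

Lemma qform_min_stationary C f mu : (forall x y, C x y = C y x) -> rayleigh_lb C mu ->
  \sum_x f x = 0 -> qform C f = mu * \sum_x f x ^+ 2 ->
  exists c, forall x, \sum_y C x y * f y = mu * f x + c.
Proof.
move=> C_sym rayleigh f0 f_eq.
pose r x := \sum_y C x y * f y - mu * f x.
have r_orth g : \sum_x g x = 0 -> \sum_x g x * r x = 0.
  move=> g0; suff /eqP : 2 * \sum_x g x * r x = 0.
    by rewrite mulf_eq0 pnatr_eq0 => /eqP.
  apply: (quadratic_ge0_lin_eq0 (c := qform C g - mu * \sum_x g x ^+ 2)) => t.
  have := rayleigh (fun x => f x + t * g x).
  rewrite big_split /= -mulr_sumr f0 g0 mulr0 addr0 => /(_ erefl).
  rewrite -subr_ge0 sumsq_qform !qformDZ ?f_eq ?sumsq_qform //; last first.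
    by move=> x y; rewrite eq_sym.
  under [X in _ <= _ - mu * (_ + _ * (2 * X) + _)]eq_bigr do rewrite sum_delta.
  have -> : \sum_x g x * r x =
      \sum_x g x * (\sum_y C x y * f y) - mu * \sum_x g x * f x.
    by rewrite mulr_sumr -sumrB; apply: eq_bigr => x _; rewrite /r; ring.
  by move=> /le_trans; apply; rewrite le_eqVlt; apply/orP; left; apply/eqP; ring.
have r_const x y : r x = r y.
  have := r_orth (pmass [:: (x, 1); (y, -1)]).
  rewrite sum_pmass sum_pmassM !big_cons !big_nil /= addr0 subrr => /(_ erefl).
  by lra.
case: (pickP (@predT T)) => [x0 _ | T0]; last by exists 0 => x; have := T0 x.
by exists (r x0) => x; rewrite -(r_const x x0) /r; ring.
Qed.

End QuadraticForm.

Lemma eigenvalue_trmx (F : fieldType) n (M : 'M[F]_n) a :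
  eigenvalue M^T a = eigenvalue M a.
Proof.
rewrite /eigenvalue /eigenspace !kermx_eq0 !row_free_unit -[in LHS]unitmx_tr.
by rewrite linearB /= trmxK tr_scalar_mx.
Qed.

Lemma eigenvalue_colP (F : fieldType) n (M : 'M[F]_n) a :
  reflect (exists2 y : 'cV_n, M *m y = a *: y & y != 0) (eigenvalue M a).
Proof.
rewrite -eigenvalue_trmx; apply: (iffP eigenvalueP) => -[v vM v_neq0];
  exists v^T; rewrite ?trmx_eq0 //.
  by rewrite -[M]trmxK -trmx_mul vM linearZ.
by rewrite -trmx_mul vM linearZ.
Qed.

Definition adj (R : realType) (T : finType) (e : rel T) (x y : T) : R := (e x y)%:R.

Section DiameterTwo.
Variables (T : finType) (e : rel T).
Hypothesis e_irr : forall x, ~~ e x x.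
Hypothesis e_diam2 : forall x y, x != y -> ~~ e x y -> exists z, e x z && e z y.

Lemma exists_edge_to x y : [exists z, e x z && (z == y)] = e x y.
Proof.
apply/existsP/idP => [[z /andP[xz /eqP <-]] //|xy].
by exists y; rewrite xy eqxx.
Qed.

Lemma gdist_diam2 x y :
  gdist e x y = if x == y then 0%N else if e x y then 1%N else 2%N.
Proof.
(* [gdist] only tries walk lengths below [#|T|]: each case first bounds [#|T|]
   from below by a list of distinct vertices. *)
have card_ge (s : seq T) : uniq s -> (size s <= #|T|)%N.
  by move=> s_uniq; rewrite -(card_uniqP s_uniq) max_card.
rewrite /gdist; have [<-|x_neq_y] := eqVneq x y.
  by have := card_ge [:: x] isT; case: #|T| => //= N _; rewrite eqxx.
have [xy|x_ny] := boolP (e x y).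
  have := card_ge [:: x; y]; rewrite /= inE x_neq_y => /(_ isT).
  by case: #|T| => [|[|N]] //= _; rewrite (negbTE x_neq_y) exists_edge_to xy.
have [z /andP[xz zy]] := e_diam2 x_neq_y x_ny.
have x_neq_z : x != z by apply: contraTneq xz => <-; exact: e_irr.
have z_neq_y : z != y by apply: contraTneq zy => ->; exact: e_irr.
have := card_ge [:: x; y; z]; rewrite /= !inE negb_or x_neq_y x_neq_z eq_sym z_neq_y.
move=> /(_ isT); case: #|T| => [|[|[|N]]] //= _.
rewrite (negbTE x_neq_y) exists_edge_to (negbTE x_ny) /= ifT //.
by apply/existsP; exists z; rewrite xz exists_edge_to zy orbT.
Qed.

Lemma distqf_diam2 (R : realType) (f : T -> R) :
  distqf e f = 2 * (\sum_x f x) ^+ 2 - 2 * \sum_x f x ^+ 2 - qform (adj R e) f.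
Proof.
have gdistE x y : (gdist e x y)%:R = 2 - 2 * (x == y)%:R - adj R e x y :> R.
  rewrite gdist_diam2 /adj; case: eqVneq => [->|_] /=.
    by rewrite (negbTE (e_irr y)) /=; ring.
  by case: (e x y) => /=; ring.
rewrite /distqf sumsq_qform /qform expr2 big_distrlr /= !mulr_sumr -!sumrB.
apply: eq_bigr => x _; rewrite !mulr_sumr -!sumrB; apply: eq_bigr => y _.
by rewrite gdistE; ring.
Qed.

End DiameterTwo.

Lemma sumsq_col_gt0 (R : realDomainType) n (y : 'cV[R]_n) : y != 0 -> 0 < \sum_i y i 0 ^+ 2.
Proof.
move=> y_neq0; rewrite lt_def sumr_ge0 ?andbT => [|i _]; last exact: sqr_ge0.
apply: contraNneq y_neq0 => /psumr_eq0P y0; apply/eqP/matrixP => i j.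
by rewrite ord1 mxE; apply/eqP; rewrite -sqrf_eq0; apply/eqP/y0 => // k _; exact: sqr_ge0.
Qed.

Lemma const_mx1_mul (R : ringType) n (y : 'cV[R]_n) :
  (const_mx 1 : 'M[R]_n) *m y = (\sum_i y i 0) *: const_mx 1.
Proof.
apply/matrixP => i j; rewrite (ord1 j) !mxE mulr1.
by apply: eq_bigr => k _; rewrite mxE mul1r.
Qed.

Lemma sum_entries_col (R : realType) n (M : 'M[R]_n) :
  sum_entries M = \sum_i (M *m (const_mx 1 : 'cV[R]_n)) i 0.
Proof.
by apply: eq_bigr => i _; rewrite mxE; apply: eq_bigr => j _; rewrite mxE mulr1.
Qed.

Lemma sum_eigenvector_eq0 (F : fieldType) n (M : 'M[F]_n) (mu k : F) (w y : 'cV_n) :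
  M^T = M -> M *m w = mu *: w -> M *m y = mu *: y + k *: const_mx 1 -> k != 0 ->
  \sum_i w i 0 = 0.
Proof.
move=> M_sym Mw My k_neq0.
have : w^T *m (M *m y) = mu *: (w^T *m y).
  by rewrite mulmxA -[M in w^T *m M]M_sym -trmx_mul Mw linearZ /= -scalemxAl.
move/eqP; rewrite My mulmxDr -!scalemxAr -subr_eq0 addrAC subrr add0r => /eqP.
move=> /matrixP /(_ 0 0); rewrite !mxE => /eqP; rewrite mulf_eq0 (negbTE k_neq0) /=.
by under eq_bigr do rewrite !mxE mulr1; move=> /eqP.
Qed.

Section Lambda.
Variables (R : realType) (m n : nat) (e : rel 'I_n).
Hypothesis e_sym : forall i j, e i j = e j i.
Hypothesis n_gt0 : (0 < n)%N.
Hypothesis m_gt0 : (0 < m)%N.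

Local Notation A := (adjmx R e).
Local Notation mR := (m%:R : R).

Lemma adjmx_tr : A^T = A.
Proof. by apply/matrixP => i j; rewrite !mxE e_sym. Qed.

Lemma mR_neq0 : mR != 0.
Proof. by rewrite pnatr_eq0 -lt0n. Qed.

Lemma Lambda3_of_eigenvector (a : R) (g : 'cV[R]_n) :
  g != 0 -> A *m g = a *: g -> \sum_i g i 0 = 0 ->
  a != 0 -> a != - mR -> a != - (2 * mR) -> in_Lambda m A a.
Proof.
move=> g_neq0 Ag g0 a0 am a2m.
have [t t2] := sumsq_normalize (sumsq_col_gt0 g_neq0).
right; right; right; split; first by apply/eigenvalue_colP; exists g.
do 3 (split; first exact/eqP); exists (t *: g); split; [|split].
- by rewrite -scalemxAr Ag !scalerA mulrC.
- by rewrite -t2 mulr_sumr; apply: eq_bigr => i _; rewrite mxE exprMn.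
- by under eq_bigr do rewrite mxE; rewrite -mulr_sumr g0 mulr0.
Qed.

Lemma Lambda1_of_stationary (mu : R) (y : 'cV[R]_n) :
  ~~ eigenvalue A mu -> \sum_i y i 0 != 0 ->
  A *m y = mu *: y + ((\sum_i y i 0) * (2 + mu / mR)) *: const_mx 1 ->
  mu != 0 -> mu != - mR -> mu != - (2 * mR) -> in_Lambda m A mu.
Proof.
move=> mu_neig s_neq0 Ay mu0 mum mu2m; have m_neq0 := mR_neq0.
set s := \sum_i y i 0 in s_neq0 Ay; set k := s * _ in Ay.
right; left; split=> //; do 3 (split; first exact/eqP).
have A_mu_unit : (A - mu%:M) \in unitmx.
  by rewrite -row_free_unit -kermx_eq0; apply/negPn.
have My : (A - mu%:M) *m y = k *: const_mx 1.
  by rewrite mulmxBl Ay mul_scalar_mx addrAC subrr add0r.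
set S := sum_entries _.
have s_eq : s = k * S.
  rewrite /S sum_entries_col mulr_sumr /s -[y](mulKmx A_mu_unit) My -scalemxAr.
  by apply: eq_bigr => i _; rewrite mxE.
have S_eq : (2 + mu / mR) * S = 1.
  by apply: (mulfI s_neq0); rewrite mulr1 mulrA -/k -s_eq.
have -> : (mu + 2 * mR) * S - mR = mR * ((2 + mu / mR) * S - 1) by field.
by rewrite S_eq subrr mulr0.
Qed.

Lemma in_Lambda_of_stationary (mu : R) (y : 'cV[R]_n) :
  mu != 0 -> (mu = - mR -> (2 <= m)%N) -> y != 0 ->
  A *m y = mu *: y + ((\sum_i y i 0) * (2 + mu / mR)) *: const_mx 1 ->
  in_Lambda m A mu.
Proof.
move=> mu0 mu_m y_neq0 Ay; have m_neq0 := mR_neq0.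
set s := \sum_i y i 0 in Ay; set k := s * _ in Ay.
have [mu_2m|mu2m] := eqVneq mu (- (2 * mR)).
  have k_eq0 : k = 0 by rewrite /k mu_2m; field.
  right; right; left; split => //; apply/eigenvalue_colP; exists y => //.
  by rewrite Ay k_eq0 scale0r addr0 mu_2m.
have [mu_m'|mum] := eqVneq mu (- mR).
  left; split; first exact: mu_m; split => //; apply/eigenvalue_colP; exists y => //.
  rewrite mulmxBl const_mx1_mul Ay (_ : k = s); last by rewrite /k mu_m'; field.
  by rewrite mu_m' scaleNr opprD opprK addrC subrK.
have [s0|s_neq0] := eqVneq s 0.
  apply: (Lambda3_of_eigenvector y_neq0 _ s0) => //.
  by rewrite Ay /k s0 mul0r scale0r addr0.
have k_neq0 : k != 0.
  rewrite /k mulf_neq0 // (_ : 2 + mu / mR = (mu + 2 * mR) / mR); last by field.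
  by rewrite mulf_neq0 ?invr_eq0 // addr_eq0.
have [/eigenvalue_colP[w Aw w_neq0]|mu_neig] := boolP (eigenvalue A mu).
  apply: (Lambda3_of_eigenvector w_neq0 Aw) => //.
  exact: sum_eigenvector_eq0 adjmx_tr Aw Ay k_neq0.
exact: Lambda1_of_stationary mu_neig s_neq0 Ay mu0 mum mu2m.
Qed.

Lemma in_Lambda_witness (b : R) : in_Lambda m A b ->
  exists y : 'cV[R]_n, exists k, [/\ y != 0, A *m y = b *: y + k *: const_mx 1 &
    (\sum_i y i 0) * (k - (2 + b / mR) * \sum_i y i 0) = 0].
Proof.
have m_neq0 := mR_neq0.
case=> [[_ [/eigenvalue_colP[v Jv v_neq0] ->]]|[[b_neig [_ [_ [_ b_eq]]]]|
        [[/eigenvalue_colP[v Av v_neq0] ->]|[_ [_ [_ [_ [g [Ag [g1 g0]]]]]]]]]].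
- exists v, (\sum_i v i 0); split => //; last by field.
  move: Jv; rewrite mulmxBl const_mx1_mul => /eqP.
  by rewrite subr_eq addrC -subr_eq => /eqP <-; rewrite scaleNr addrC.
- have A_b_unit : (A - b%:M) \in unitmx.
    by rewrite -row_free_unit -kermx_eq0; apply/negPn.
  pose y : 'cV[R]_n := invmx (A - b%:M) *m const_mx 1.
  have My : (A - b%:M) *m y = const_mx 1 by rewrite mulKVmx.
  exists y, 1; split.
  + apply: contra_eq_neq My => ->; rewrite mulmx0; apply/eqP.
    move=> /matrixP /(_ (Ordinal n_gt0) 0); rewrite !mxE => /eqP.
    by rewrite eq_sym oner_eq0.
  + move: My; rewrite mulmxBl mul_scalar_mx scale1r => /eqP.
    by rewrite subr_eq addrC => /eqP.
  + have S_eq : (2 + b / mR) * sum_entries (invmx (A - b%:M)) = 1.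
      apply: (mulfI m_neq0); rewrite mulr1 mulrA.
      have -> : mR * (2 + b / mR) = b + 2 * mR by field.
      by apply/eqP; rewrite -subr_eq0 b_eq.
    by rewrite -sum_entries_col S_eq subrr mulr0.
- by exists v, 0; split => //; [rewrite Av scale0r addr0 | field].
- exists g, 0; split; last by rewrite g0 mul0r.
    apply/eqP => g_eq0; move: g1; rewrite g_eq0 big1 => [/eqP|i _].
      by rewrite eq_sym oner_eq0.
    by rewrite mxE expr0n.
  by rewrite Ag scale0r addr0.
Qed.

End Lambda.

Section Join.
Variables (R : realType) (m n : nat) (e : rel 'I_n).
Hypothesis e_sym : forall i j, e i j = e j i.
Hypothesis e_irr : forall i, ~~ e i i.
Hypothesis n_gt0 : (0 < n)%N.
Hypothesis m_gt0 : (0 < m)%N.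

Local Notation T := ('I_m + 'I_n)%type.
Local Notation J := (join_Kbar m e).
Local Notation A := (adjmx R e).
Local Notation mR := (m%:R : R).

Lemma join_irr x : ~~ J x x.
Proof. by case: x. Qed.

Lemma adj_join_sym x y : adj R J x y = adj R J y x.
Proof. by rewrite /adj; case: x => [a|i]; case: y => [b|j] //=; rewrite e_sym. Qed.

Lemma join_diam2 x y : x != y -> ~~ J x y -> exists z, J x z && J z y.
Proof.
case: x => [a|i]; case: y => [b|j] //= _ _.
  by exists (inr (Ordinal n_gt0)).
by exists (inl (Ordinal m_gt0)).
Qed.

Lemma rowsum_adj_join_inl (f : T -> R) a :
  \sum_z adj R J (inl a) z * f z = \sum_i f (inr i).
Proof.
rewrite big_sumType /= big1 ?add0r => [|b _]; last by rewrite /adj mul0r.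
by apply: eq_bigr => i _; rewrite /adj mul1r.
Qed.

Lemma rowsum_adj_join_inr (f : T -> R) i :
  \sum_z adj R J (inr i) z * f z =
  \sum_a f (inl a) + (A *m \col_j f (inr j)) i 0.
Proof.
rewrite big_sumType /=; congr (_ + _); first by apply: eq_bigr => a _; rewrite /adj mul1r.
by rewrite mxE; apply: eq_bigr => j _; rewrite !mxE.
Qed.

Lemma qform_adj_join (f : T -> R) :
  qform (adj R J) f = 2 * (\sum_a f (inl a)) * (\sum_i f (inr i)) +
                      \sum_i f (inr i) * (A *m \col_j f (inr j)) i 0.
Proof.
rewrite qformE big_sumType /=.
under eq_bigr do rewrite rowsum_adj_join_inl.
under [X in _ + X]eq_bigr do rewrite rowsum_adj_join_inr mulrDr.
by rewrite big_split /= -!mulr_suml; ring.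
Qed.

Lemma join_rayleigh_le_neg1 (mu : R) : rayleigh_lb (adj R J) mu -> mu <= -1.
Proof.
move=> rayleigh; pose i := Ordinal n_gt0.
have := rayleigh (pmass [:: (inr i, 1); (inl (Ordinal m_gt0), -1)]).
rewrite sum_pmass sumsq_qform !qform_pmass !big_cons !big_nil /adj /=.
by rewrite (negbTE (e_irr i)) /= addr0 subrr => /(_ erefl); lra.
Qed.

Lemma join_nonedge : m = 1%N -> ~ complete_graph J -> exists i j, i != j /\ ~~ e i j.
Proof.
move=> m1 J_ncomplete.
case/boolP: [exists i, exists j, (i != j) && ~~ e i j].
  by move=> /existsP[i /existsP[j /andP[i_neq_j i_nadj_j]]]; exists i, j.
rewrite negb_exists => /forallP no_nonedge; case: J_ncomplete => -[a|i] [b|j] //= xy.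
  have ord_m1 (c : 'I_m) : val c = 0%N by apply/eqP; rewrite -leqn0 -ltnS -m1 ltn_ord.
  by move: xy; rewrite (_ : a = b) ?eqxx //; apply: val_inj; rewrite !ord_m1.
have := no_nonedge i; rewrite negb_exists => /forallP/(_ j).
by rewrite negb_and !negbK => /orP[/eqP ij|//]; rewrite ij eqxx in xy.
Qed.

Lemma join_rayleigh_lt_neg1 (mu : R) :
  m = 1%N -> ~ complete_graph J -> rayleigh_lb (adj R J) mu -> mu < -1.
Proof.
move=> m1 J_ncomplete rayleigh.
have [i [j [i_neq_j i_nadj_j]]] := join_nonedge m1 J_ncomplete.
have := rayleigh (pmass [:: (inl (Ordinal m_gt0), -2); (inr i, 1); (inr j, 1)]).
rewrite sum_pmass sumsq_qform !qform_pmass !big_cons !big_nil /adj /=.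
rewrite !eqxx -[inr i == inr j]/(i == j) -[inr j == inr i]/(j == i).
rewrite (eq_sym j i) (negbTE i_neq_j).
rewrite (e_sym j i) (negbTE i_nadj_j) !(negbTE (e_irr _)) /=.
by move=> /(_ ltac:(lra)); lra.
Qed.

Lemma join_stationary_col (f : T -> R) (mu c : R) :
  mu != 0 -> \sum_x f x = 0 -> \sum_x f x ^+ 2 != 0 ->
  (forall x, \sum_z adj R J x z * f z = mu * f x + c) ->
  exists2 y : 'cV[R]_n, y != 0 &
    A *m y = mu *: y + ((\sum_i y i 0) * (2 + mu / mR)) *: const_mx 1.
Proof.
move=> mu_neq0 f0 f_neq0 f_stat; have m_neq0 := mR_neq0 R m_gt0.
set s := \sum_i f (inr i); pose y := \col_i f (inr i).
have sum_y : \sum_i y i 0 = s by apply: eq_bigr => i _; rewrite mxE.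
have f_inl a : f (inl a) = (s - c) / mu.
  by have := f_stat (inl a); rewrite rowsum_adj_join_inl -/s => ->; field.
have sum_inl : \sum_a f (inl a) = - s.
  by move: f0; rewrite big_sumType -/s => /eqP; rewrite addr_eq0 => /eqP.
have c_eq : c = s + mu * s / mR.
  have : (s - c) / mu * mR = - s.
    by rewrite -sum_inl (eq_bigr _ (fun a _ => f_inl a)) sumr_const card_ord mulr_natr.
  move=> h; have -> : c = s - (s - c) / mu * mR * mu / mR.
    by field; rewrite m_neq0 mu_neq0.
  by rewrite h; field.
exists y.
  apply: contraNneq f_neq0 => y0.
  have f_inr i : f (inr i) = 0.
    by have := congr1 (fun M : 'cV[R]_n => M i 0) y0; rewrite !mxE.
  have s0 : s = 0 by rewrite /s big1.
  apply/eqP; rewrite big_sumType big1 => [|a _].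
    by rewrite /= add0r big1 // => i _; rewrite f_inr expr0n.
  by rewrite f_inl c_eq s0 !(mul0r, mulr0, subrr, addr0) expr0n.
apply/matrixP => i j; rewrite (ord1 j) sum_y.
have := f_stat (inr i); rewrite rowsum_adj_join_inr sum_inl -/y => h.
by rewrite -(addKr (- s) ((A *m y) i 0)) h c_eq !mxE; field.
Qed.

Lemma join_qform_witness (a k : R) (y : 'cV[R]_n) :
  y != 0 -> A *m y = a *: y + k *: const_mx 1 ->
  (\sum_i y i 0) * (k - (2 + a / mR) * \sum_i y i 0) = 0 ->
  exists f : T -> R, [/\ \sum_x f x = 0, 0 < \sum_x f x ^+ 2 &
                        qform (adj R J) f = a * \sum_x f x ^+ 2].
Proof.
move=> y_neq0 Ay yk; have m_neq0 := mR_neq0 R m_gt0; set s := \sum_i y i 0 in yk.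
pose f (x : T) : R := if x is inr i then y i 0 else - s / mR.
have sum_inl : \sum_a f (inl a) = - s.
  by rewrite sumr_const card_ord -mulr_natr; field.
have col_f : \col_i f (inr i) = y by apply/matrixP => i j; rewrite (ord1 j) mxE.
exists f; split.
- by rewrite big_sumType /= sum_inl addNr.
- rewrite big_sumType /=; apply: lt_le_trans (sumsq_col_gt0 y_neq0) _.
  by rewrite lerDr sumr_ge0 // => b _; exact: sqr_ge0.
rewrite qform_adj_join sum_inl col_f big_sumType /= sumr_const card_ord -/s.
have -> : \sum_i y i 0 * (A *m y) i 0 = a * \sum_i y i 0 ^+ 2 + k * s.
  rewrite /s !mulr_sumr -big_split; apply: eq_bigr => i _.
  by rewrite Ay !mxE /=; ring.
(* qform f - a * |f|^2 = s * (k - (2 + a / m) * s) *)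
by apply/eqP; rewrite -subr_eq0 -mulr_natr; apply/eqP; rewrite -yk; field.
Qed.

Lemma join_rayleigh_le_Lambda (mu : R) :
  rayleigh_lb (adj R J) mu -> forall b, in_Lambda m A b -> mu <= b.
Proof.
move=> rayleigh b /(in_Lambda_witness n_gt0 m_gt0) [y [k [y_neq0 Ay yk]]].
have [f [f0 f_pos f_eq]] := join_qform_witness y_neq0 Ay yk.
by have := rayleigh f f0; rewrite f_eq ler_pM2r.
Qed.

Lemma join_is_QEC (f : T -> R) :
  \sum_x f x ^+ 2 = 1 -> \sum_x f x = 0 ->
  rayleigh_lb (adj R J) (qform (adj R J) f) ->
  is_QEC J (- qform (adj R J) f - 2).
Proof.
have distqfE := distqf_diam2 join_irr join_diam2.
move=> f1 f0 rayleigh; split.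
  by exists f; rewrite distqfE f0 f1 expr0n /=; split => //; split => //; ring.
move=> g g1 g0; rewrite distqfE g0 g1 expr0n /=.
by have := rayleigh g g0; rewrite g1 mulr1; lra.
Qed.

End Join.

Theorem theorem3p7 (R : realType) (n m : nat) (e : rel 'I_n) :
  simple_graph e -> (1 <= n)%N -> (1 <= m)%N ->
  ~ complete_graph (join_Kbar m e) ->
  exists a0 : R,
    in_Lambda m (adjmx R e) a0 /\
    (forall b : R, in_Lambda m (adjmx R e) b -> a0 <= b) /\
    is_QEC (join_Kbar m e) (- a0 - 2).
Proof.
move=> [e_sym e_irr] n_gt0 m_gt0 J_ncomplete.
have card_gt1 : (1 < #|{: 'I_m + 'I_n}|)%N.
  by rewrite card_sum !card_ord -(addn1 1) leq_add.
have [f [f1 f0 f_min]] := qform_min_exists (adj R (join_Kbar m e)) card_gt1.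
set mu := qform _ f in f_min *.
have rayleigh := qform_min_rayleigh_lb f_min.
have f_eq : mu = mu * \sum_x f x ^+ 2 by rewrite f1 mulr1.
have [c f_stat] := qform_min_stationary (adj_join_sym _ e_sym) rayleigh f0 f_eq.
have mu_le := join_rayleigh_le_neg1 e_irr n_gt0 m_gt0 rayleigh.
have mu_neq0 : mu != 0 by rewrite lt_eqF // (le_lt_trans mu_le) // ltrN10.
have f_neq0 : \sum_x f x ^+ 2 != 0 by rewrite f1 oner_neq0.
have [y y_neq0 Ay] := join_stationary_col m_gt0 mu_neq0 f0 f_neq0 f_stat.
have mu_m : mu = - m%:R -> (2 <= m)%N.
  move=> mu_eq; rewrite ltn_neqAle m_gt0 andbT; apply/eqP => m1.
  have := join_rayleigh_lt_neg1 e_sym e_irr m_gt0 (esym m1) J_ncomplete rayleigh.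
  by rewrite -/mu mu_eq -m1 mulr1n ltxx.
exists mu; split; first exact: in_Lambda_of_stationary mu_neq0 mu_m y_neq0 Ay.
split; first exact: join_rayleigh_le_Lambda rayleigh.
exact: join_is_QEC f1 f0 rayleigh.
Qed.
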